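(* Let $p$ be an odd prime, $\alpha>1$ an integer with $\gcd(p,\alpha)=1$, $\gamma=\operatorname{ord}_p(\alpha)$, and let $n\ge1$, $s\geq 0$, $t\geq 1$ be integers. Then $$S_p^n(s\gamma p^t)\leq 2 s\gamma\, t^{n-1}\left(\frac{p+1}{2}\right)^t .$$
   Context: A base-$p$ digit $d\in\{0,\dots,p-1\}$ is called small if $d<p/2$ and large otherwise. For integers $a,n\ge1$, $S_p^n(a)=\#\{0\le s<a : \text{the base-}p\text{ representation of }\alpha^s\text{ contains fewer than } n \text{ large digits}\}$ (this depends on the fixed $\alpha$). *)

From mathcomp Require Import all_boot all_order all_algebra.
Set Implicit Arguments. Unset Strict Implicit. Unset Printing Implicit Defensive.

(* Base-p digits of m, least significant first; [::] for m = 0.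
   The fuel m suffices since each step divides by p >= 2. *)
Fixpoint digits_aux (p fuel m : nat) : seq nat :=
  if fuel is k.+1 then
    if m == 0 then [::] else (m %% p) :: digits_aux p k (m %/ p)
  else [::].
Definition digits (p m : nat) : seq nat := digits_aux p m m.

Definition large_digit (p d : nat) : bool := p <= 2 * d.

Definition num_large (p m : nat) : nat := count (large_digit p) (digits p m).

Definition S_count (p alpha n a : nat) : nat :=
  count (fun s => num_large p (alpha ^ s) < n) (iota 0 a).

(* multiplicative order of alpha mod p: least k >= 1 with alpha^k = 1 (mod p);
   for p prime and gcd(alpha,p)=1 it is < p, so searching 1..p suffices. *)
Definition ordp (p alpha : nat) : nat :=
  head 0 [seq k <- iota 1 p | alpha ^ k == 1 %[mod p]].

From mathcomp Require Import all_boot all_order all_algebra ring zify.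

Set Implicit Arguments.
Unset Strict Implicit.
Unset Printing Implicit Defensive.

(* Write alpha^g = 1 + p^v u with v >= 1 and p coprime to u, g the order of alpha mod p.
   Lifting the exponent gives alpha^(g p^t) = 1 + p^(v+t) x with p coprime to x, so the
   numbers alpha^(k + g p^t q), q < p, share the digits of index < v + t of alpha^k, while
   their digit of index v + t is an affine function of q with slope prime to p and thus
   takes every value exactly once.  By induction on t, among k < g p^t exactly g f(t, n)
   have fewer than n large digits in positions v, ..., v + t - 1, where f(t, n) counts the
   strings of t base-p digits with fewer than n large ones; an elementary induction bounds
   f(t, n) by 2 t^(n-1) ((p+1)/2)^t. *)

Definition digit (p i m : nat) : nat := m %/ p ^ i %% p.

Definition num_large_window (p v t m : nat) : nat :=
  count (fun i => large_digit p (digit p i m)) (iota v t).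

Lemma large_digit0 p : 0 < p -> large_digit p 0 = false.
Proof. by rewrite /large_digit muln0 leqn0 => /lt0n_neq0/negbTE. Qed.

Lemma num_large_window0 p v t : 0 < p -> num_large_window p v t 0 = 0.
Proof.
move=> p_gt0; rewrite /num_large_window (eq_count (a2 := pred0)) ?count_pred0 // => i.
by rewrite /= /digit div0n mod0n large_digit0.
Qed.

Lemma num_large_window_divn p v t m :
  num_large_window p v.+1 t m = num_large_window p v t (m %/ p).
Proof.
rewrite /num_large_window -add1n iotaDl count_map; apply: eq_count => i /=.
by rewrite /digit add1n expnS divnMA.
Qed.

Lemma num_large_window_le_digits_aux p f m t : 1 < p -> m <= f ->
  num_large_window p 0 t m <= count (large_digit p) (digits_aux p f m).
Proof.
move=> p_gt1; have p_gt0 := ltnW p_gt1.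
elim: f m t => [|f IHf] m t m_le_f.
  by move: m_le_f; rewrite leqn0 => /eqP->; rewrite num_large_window0.
have [-> | m_gt0] := posnP m; first by rewrite num_large_window0.
case: t => [|t] //=; rewrite (negbTE (lt0n_neq0 m_gt0)) /=.
rewrite /num_large_window /= -/(num_large_window p 1 t m) num_large_window_divn.
rewrite /digit expn0 divn1 leq_add2l.
by apply: IHf; rewrite -ltnS (leq_trans _ m_le_f) // ltn_Pdiv.
Qed.

Lemma num_large_window_le p v t m : 1 < p -> num_large_window p v t m <= num_large p m.
Proof.
move=> p_gt1; apply: leq_trans (num_large_window_le_digits_aux (v + t) p_gt1 (leqnn m)).
by rewrite /num_large_window iotaD count_cat leq_addl.
Qed.

Lemma digit_addr_expn p i K m W : 0 < p -> i < K -> digit p i (m + p ^ K * W) = digit p i m.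
Proof.
move=> p_gt0 /subnKC <-; rewrite /digit.
have -> : m + p ^ (i.+1 + (K - i.+1)) * W = (p ^ (K - i.+1) * W * p) * p ^ i + m.
  by rewrite expnD expnS; ring.
by rewrite divnMDl ?expn_gt0 ?p_gt0 // modnMDl.
Qed.

Lemma digit_add_expn p K m W Z : 0 < p ->
  digit p K (m + p ^ K * W + p ^ K.+1 * Z) = (digit p K m + W) %% p.
Proof.
move=> p_gt0; rewrite /digit.
have -> : m + p ^ K * W + p ^ K.+1 * Z = (Z * p + W) * p ^ K + m by rewrite expnS; ring.
by rewrite divnMDl ?expn_gt0 ?p_gt0 // -addnA modnMDl modnDml addnC.
Qed.

Lemma num_large_window_add_expn p v t m W Z : 0 < p ->
  num_large_window p v t.+1 (m + p ^ (v + t) * W + p ^ (v + t).+1 * Z) =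
  num_large_window p v t m + large_digit p ((digit p (v + t) m + W) %% p).
Proof.
move=> p_gt0; rewrite /num_large_window -[t.+1]addn1 iotaD count_cat /= addn0.
rewrite digit_add_expn //; congr (_ + _); apply: eq_in_count => i.
rewrite mem_iota => /andP[_ i_lt] /=.
have -> : m + p ^ (v + t) * W + p ^ (v + t).+1 * Z = m + p ^ (v + t) * (W + p * Z).
  by rewrite expnS; ring.
by rewrite digit_addr_expn.
Qed.

Lemma binomial_second_order a m :
  exists R, (1 + a) ^ m = 1 + m * a + 'C(m, 2) * a ^ 2 + a ^ 3 * R.
Proof.
elim: m => [|m [R IHm]]; first by exists 0; rewrite expn0 bin0n !mul0n muln0 !addn0.
by exists ('C(m, 2) + R + a * R); rewrite expnSr IHm binS bin1; ring.
Qed.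

Lemma binomial_first_order_expn p K x m : 0 < K ->
  exists Z, (1 + p ^ K * x) ^ m = 1 + p ^ K * (m * x) + p ^ K.+1 * Z.
Proof.
case: K => [|K] // _; have [R ->] := binomial_second_order (p ^ K.+1 * x) m.
by exists (p ^ K * x ^ 2 * ('C(m, 2) + p ^ K.+1 * x * R)); rewrite !expnS; ring.
Qed.

Lemma lifting_the_exponent p v u i : odd p -> 0 < v -> coprime p u ->
  exists2 x, coprime p x & (1 + p ^ v * u) ^ (p ^ i) = 1 + p ^ (v + i) * x.
Proof.
move=> p_odd v_gt0 p_u; elim: i => [|i [x p_x IHi]].
  by exists u; rewrite ?expn0 ?expn1 ?addn0.
have [R HR] := binomial_second_order (p ^ (v + i) * x) p.
have [w vi] : exists w, v + i = w.+1 by exists (v + i).-1; rewrite prednK // addn_gt0 v_gt0.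
exists (x + p * (p ^ w * x ^ 2 * p.-1./2 + p ^ (w + w) * x ^ 3 * R)).
  by rewrite /coprime addnC mulnC gcdnMDl.
(* C(p, 2) is divisible by p since p is odd *)
rewrite expnSr expnM IHi HR bin2odd // addnS vi !expnS !expnD; ring.
Qed.

Lemma eqn_modMl_coprime d B m1 m2 : coprime d B ->
  (B * m1 == B * m2 %[mod d]) = (m1 == m2 %[mod d]).
Proof.
move=> d_B; wlog le_m21 : m1 m2 / m2 <= m1.
  move=> le_sym; case: (leqP m2 m1) => [/le_sym // | /ltnW /le_sym].
  by rewrite eq_sym => ->; apply: eq_sym.
by rewrite !eqn_mod_dvd ?leq_mul2l ?le_m21 ?orbT // -mulnBr Gauss_dvdr.
Qed.

Lemma sum_affine_mod p D B (F : nat -> nat) : coprime p B ->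
  \sum_(0 <= m < p) F ((D + B * m) %% p) = \sum_(0 <= d < p) F d.
Proof.
move=> p_B; rewrite -(big_map (fun m => (D + B * m) %% p) xpredT); apply: perm_big.
have inj : {in index_iota 0 p &, injective (fun m => (D + B * m) %% p)}.
  move=> m1 m2; rewrite !mem_index_iota => /andP[_ m1_lt] /andP[_ m2_lt] /eqP.
  by rewrite eqn_modDl eqn_modMl_coprime // !modn_small // => /eqP.
have uniq_img : uniq [seq (D + B * m) %% p | m <- index_iota 0 p].
  by rewrite map_inj_in_uniq ?iota_uniq.
apply: uniq_perm; rewrite ?iota_uniq //.
apply: (uniq_min_size uniq_img _ _).2 => [_ /mapP[m m_in ->] | ]; last by rewrite size_map.
by move: m_in; rewrite !mem_index_iota ltn_mod; lia.
Qed.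

Lemma sum_large_digit p h (F : bool -> nat) : p = h.*2.+1 ->
  \sum_(0 <= d < p) F (large_digit p d) = h.+1 * F false + h * F true.
Proof.
move=> p_def; rewrite (big_cat_nat (n := h.+1)) //=; last by rewrite p_def; lia.
rewrite (@eq_big_nat _ _ _ 0 h.+1 _ (fun=> F false)); last first.
  by move=> d /andP[_ d_le]; rewrite /large_digit p_def; congr F; apply/negbTE; lia.
rewrite (@eq_big_nat _ _ _ h.+1 p _ (fun=> F true)); last first.
  by move=> d /andP[d_gt _]; rewrite /large_digit p_def; congr F; apply/idP; lia.
by rewrite !sum_nat_const_nat p_def; congr (_ * _ + _ * _); lia.
Qed.

Lemma sum_nat_blocks a L (F : nat -> nat) :
  \sum_(0 <= x < a * L) F x = \sum_(0 <= q < a) \sum_(0 <= r < L) F (q * L + r).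
Proof.
rewrite big_nat_mul; apply: eq_bigr => q _.
by rewrite -{1}[q * L]add0n big_addn mulSn addnK; apply: eq_bigr => r _; rewrite addnC.
Qed.

Lemma count_iota_sum (P : pred nat) N : count P (iota 0 N) = \sum_(0 <= i < N) P i.
Proof. by rewrite -sum1_count big_mkcond /index_iota subn0; apply: eq_bigr => i _; case: (P i). Qed.

(* [few_large h t n] is the number of strings of t digits in base 2h+1 with fewer than n
   large digits: h digit values are large and h+1 are small. *)
Fixpoint few_large (h t n : nat) : nat :=
  match t, n with
  | 0, _ => (0 < n)
  | _.+1, 0 => 0
  | t.+1, n.+1 => h.+1 * few_large h t n.+1 + h * few_large h t n
  end.

Lemma few_large_le h t n : few_large h t.+1 n.+1 <= 2 * t.+1 ^ n * h.+1 ^ t.+1.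
Proof.
elim: t n => [|t IHt] [|n] /=; rewrite ?exp1n ?muln0 ?addn0 ?muln1; try lia.
  by rewrite [h.+1 ^ _]expnS mulnCA leq_mul2l IHt orbT.
have t_pow : t.+1 ^ n <= t.+2 ^ n by case: n {IHt} => // n; rewrite leq_exp2r.
apply: leq_trans (leq_add (leq_mul (leqnn h.+1) (IHt n.+1)) (leq_mul (leqnSn h) (IHt n))) _.
rewrite -mulnDr !expnS (@leq_trans (2 * (t.+2 * t.+1 ^ n) * (h.+1 * (h.+1 * h.+1 ^ t)))) //.
  by apply/eq_leq; ring.
by rewrite leq_mul2r !leq_mul2l t_pow !orbT.
Qed.

Section PowerDigits.

Variables (p h alpha g v u : nat).
Hypothesis p_def : p = h.*2.+1.
Hypothesis p_alpha : coprime p alpha.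
Hypothesis v_gt0 : 0 < v.
Hypothesis p_u : coprime p u.
Hypothesis alpha_g : alpha ^ g = 1 + p ^ v * u.

Let p_gt0 : 0 < p. Proof. by rewrite p_def. Qed.

Lemma expn_period_expansion t : exists2 x, coprime p x & forall k q, exists Z,
  alpha ^ (k + g * p ^ t * q) = alpha ^ k + p ^ (v + t) * (alpha ^ k * x * q) + p ^ (v + t).+1 * Z.
Proof.
have p_odd : odd p by rewrite p_def /= odd_double.
have [x p_x lift] := lifting_the_exponent t p_odd v_gt0 p_u.
have vt_gt0 : 0 < v + t by rewrite addn_gt0 v_gt0.
exists x => // k q; have [Z expand] := binomial_first_order_expn p x q vt_gt0.
by exists (alpha ^ k * Z); rewrite expnD !expnM alpha_g lift expand; ring.
Qed.

Lemma sum_few_large_window t n b :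
  \sum_(0 <= r < g * p ^ t) (num_large_window p v t (alpha ^ (b + r)) < n) =
  g * few_large h t n.
Proof.
elim: t n => [|t IHt] n.
  by rewrite (eq_bigr (fun=> (0 < n) : nat)) // sum_nat_const_nat expn0 muln1 subn0.
case: n => [|n]; first by rewrite muln0 big1.
have [x p_x expand] := expn_period_expansion t.
set L := g * p ^ t; pose w r := num_large_window p v t (alpha ^ (b + r)).
have step r q : num_large_window p v t.+1 (alpha ^ (b + (q * L + r))) =
    w r + large_digit p ((digit p (v + t) (alpha ^ (b + r)) + alpha ^ (b + r) * x * q) %% p).
  rewrite (addnC (q * L)) addnA [q * L]mulnC.
  by have [Z ->] := expand (b + r) q; rewrite num_large_window_add_expn.
(* Along q the lower digits stay those of alpha^(b + r), while digit v + t runs over all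
   residues mod p. *)
rewrite expnS mulnCA sum_nat_blocks exchange_big_nat /=.
under eq_bigr => r _.
  under eq_bigr => q _ do rewrite step.
  rewrite (sum_affine_mod _ (fun d => w r + large_digit p d < n.+1)); last first.
    by rewrite coprimeMr p_x andbT coprimeXr.
  rewrite (sum_large_digit (fun l : bool => w r + l < n.+1) p_def) addn0 addn1 (ltnS (w r).+1).
  over.
by rewrite big_split /= -!big_distrr /= !IHt; ring.
Qed.

Hypothesis p_gt1 : 1 < p.

Lemma S_count_le_few_large s t n : S_count p alpha n (s * g * p ^ t) <= s * (g * few_large h t n).
Proof.
apply: leq_trans (sub_count (a2 := fun k => num_large_window p v t (alpha ^ k) < n) _ _) _.
  by move=> k /= few; apply: leq_ltn_trans few; apply: num_large_window_le.
rewrite count_iota_sum -mulnA sum_nat_blocks.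
rewrite (eq_bigr (fun=> g * few_large h t n)) => [|q _]; last exact: sum_few_large_window.
by rewrite sum_nat_const_nat subn0.
Qed.

End PowerDigits.

Lemma ordp_expn_mod p alpha : 0 < ordp p alpha -> alpha ^ ordp p alpha = 1 %[mod p].
Proof.
rewrite /ordp; case E: [seq k <- iota 1 p | alpha ^ k == 1 %[mod p]] => [|k ks] //= _.
by have := mem_head k ks; rewrite -E mem_filter => /andP[/eqP].
Qed.

Lemma mod1_pfactor_decomp p a : prime p -> 1 < a -> a = 1 %[mod p] ->
  exists2 v, 0 < v & exists2 u, coprime p u & a = 1 + p ^ v * u.
Proof.
move=> p_prime a_gt1 a_mod.
have a1_gt0 : 0 < a - 1 by rewrite subn_gt0.
have [u p_u a1_def] := pfactor_coprime p_prime a1_gt0.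
have p_dvd : p %| a - 1 by rewrite -eqn_mod_dvd; [apply/eqP | apply: ltnW].
exists (logn p (a - 1)); first by rewrite logn_gt0 mem_primes p_prime a1_gt0 p_dvd.
by exists u => //; rewrite [p ^ _ * u]mulnC -a1_def subnKC // ltnW.
Qed.

Import GRing.Theory Num.Theory.
Local Open Scope ring_scope.

Theorem lemma2p8 (p alpha n s t : nat) :
  prime p -> odd p -> (1 < alpha)%N -> coprime p alpha ->
  (1 <= n)%N -> (1 <= t)%N ->
  ((S_count p alpha n (s * ordp p alpha * p ^ t)%N)%:R : rat)
    <= 2 * s%:R * (ordp p alpha)%:R * (t%:R) ^+ (n.-1)
       * ((p.+1)%:R / 2) ^+ t.
Proof.
move=> p_prime p_odd alpha_gt1 p_alpha n_ge1 t_ge1.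
set g := ordp p alpha; have [g0 | g_gt0] := posnP g.
  by rewrite g0 muln0 mul0n /S_count mulr0 !mul0r.
have alpha_g_gt1 : (1 < alpha ^ g)%N by rewrite -(exp1n g) ltn_exp2r.
have [v v_gt0 [u p_u alpha_g]] :=
  mod1_pfactor_decomp p_prime alpha_g_gt1 (ordp_expn_mod g_gt0).
set h := p./2; have p_def : p = h.*2.+1 by rewrite -[LHS]odd_double_half p_odd.
have count_le :=
  S_count_le_few_large p_def p_alpha v_gt0 p_u alpha_g (prime_gt1 p_prime) s t n.
case: n n_ge1 count_le => [//|n] _; case: t t_ge1 => [//|t] _ count_le.
have -> : (p.+1)%:R / 2 = h.+1%:R :> rat by rewrite p_def -doubleS -muln2 natrM mulfK.
have -> : 2 * s%:R * g%:R * t.+1%:R ^+ n * h.+1%:R ^+ t.+1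
    = (s * (g * (2 * t.+1 ^ n * h.+1 ^ t.+1)))%:R :> rat by rewrite !natrM !natrX; ring.
by rewrite ler_nat (leq_trans count_le) // !leq_mul2l few_large_le !orbT.
Qed.
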